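(* Let $K$ be a field, $V$ a finite-dimensional $K$-vector space, $W$ a $K$-subspace of $V$, and $U$ a complement of $W$ in $V$, so $V=W\oplus U$; for $u\in U$ put $W_u=W+u$. Let $\vec{v}=(v_u)_{u\in U}$ be a family of vectors in $V$ and $\vec{\varphi}=(\varphi_u)_{u\in U}$ a family of $K$-endomorphisms of $V$ with $\varphi_u(W)\subseteq W$ for all $u$. Let $f=f_{\vec{\varphi},\vec{v}}:V\to V$ be defined by $f(x)=\varphi_u(x)+v_u$ for $x\in W_u$, and let $g=g_{\vec{\varphi},\vec{v}}:U\to U$ be the unique function with $f(W_u)\subseteq W_{g(u)}$ for all $u\in U$. Then: (1) $f$ is a permutation of $V$ if and only if for every $u\in U$ the restriction of $\varphi_u$ to $W$ is an automorphism of $W$ and $g$ is a permutation of $U$. (2) $f$ is a complete mapping of $V$ if and only if for every $u\in U$ the restriction of $\varphi_u$ to $W$ is a complete automorphism of $W$ (i.e., both $\varphi_u|_W$ and $\varphi_u|_W+\operatorname{id}_W$ are automorphisms of $W$) and $g$ is a complete mapping of $U$.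
   Context: A complete mapping of an additive group $G$ is a permutation $h$ of $G$ such that $x\mapsto h(x)+x$ is also a permutation of $G$. *)

From HB Require Import structures.
From mathcomp Require Import all_boot all_order all_algebra.
Set Implicit Arguments. Unset Strict Implicit. Unset Printing Implicit Defensive.
Import GRing.Theory.
Local Open Scope ring_scope.

Definition bij_on (T : eqType) (A : pred T) (h : T -> T) : Prop :=
  [/\ {in A, forall x, h x \in A}, {in A &, injective h}
    & {in A, forall y, exists2 x, x \in A & h x = y}].

Definition complete_on (T : zmodType) (A : pred T) (h : T -> T) : Prop :=
  bij_on A h /\ bij_on A (fun x => h x + x).

Section FG.
Variables (K : fieldType) (V : vectType K) (W U : {vspace V}).
Variables (phi : V -> 'End(V)) (v : V -> V).

(* the U-component of x, i.e. the unique u in U with x \in W + u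
   (projection onto U along W; valid as V = W (+) U) *)
Definition ucomp (x : V) : V := daddv_pi U W x.

Definition f_fam (x : V) : V := phi (ucomp x) x + v (ucomp x).

(* g : U -> U with f(W_u) \subseteq W_{g u}: g u is the U-component of f u *)
Definition g_fam (u : V) : V := ucomp (f_fam u).
End FG.

From HB Require Import structures.
From mathcomp Require Import all_boot all_order all_algebra.
Set Implicit Arguments. Unset Strict Implicit. Unset Printing Implicit Defensive.
Import GRing.Theory.
Local Open Scope ring_scope.

(* [ucomp] sends the coset [W_u] to [u], and [ucomp (f x) = g (ucomp x)],
   so [f] permutes the cosets as [g] permutes [U], while on each coset it acts as the
   affine map [w + u |-> phi_u w + f u] from [W_u] to [W_(g u)].  Hence [f] is
   bijective iff [g] and all [phi_u|W] are; an injective endomorphism of the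
   finite-dimensional [W] is onto.  Part (2) follows by applying (1) to [phi_u + id]:
   this replaces [f] by [f + id] and [g] by [g + id]. *)

Lemma bijective_bij_on (T : choiceType) (h : T -> T) :
  bijective h <-> bij_on predT h.
Proof.
split=> [[k hK kK] | [_ h_inj h_surj]].
  by split=> [x _ | x y _ _ | y _]; [| exact: (can_inj hK) | exists (k y)].
have ex_pre y : exists x, h x == y by have [x _ <-] := h_surj y isT; exists x.
exists (fun y => xchoose (ex_pre y)) => [x | y]; last exact/eqP/(xchooseP (ex_pre y)).
by apply: h_inj => //; apply/eqP/(xchooseP (ex_pre (h x))).
Qed.

Lemma eq_bij_on (T : eqType) (A : pred T) (h1 h2 : T -> T) :
  {in A, h1 =1 h2} -> bij_on A h1 <-> bij_on A h2.
Proof.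
suff imp k1 k2 : {in A, k1 =1 k2} -> bij_on A k1 -> bij_on A k2.
  by move=> E; split; apply: imp => // x /E.
move=> E [k1A k1_inj k1_surj]; split=> [x xA | x y xA yA | y /k1_surj [x xA <-]].
- by rewrite -E ?k1A.
- by rewrite -!E //; apply: k1_inj.
- by exists x; rewrite ?E.
Qed.

Lemma lfun_bij_on (K : fieldType) (V : vectType K) (W : {vspace V}) (h : 'End(V)) :
  (forall w, w \in W -> h w \in W) -> {in W &, injective h} ->
  bij_on [pred x | x \in W] h.
Proof.
move=> hW h_inj; split=> //.
have W_ker : (W :&: lker h = 0)%VS.
  apply/eqP; rewrite -subv0; apply/subvP=> x; rewrite memv_cap memv_ker memv0.
  case/andP=> xW /eqP hx0; apply/eqP/h_inj; rewrite ?mem0v ?linear0 //.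
have hWW : (h @: W <= W)%VS by apply/subvP=> _ /memv_imgP [x xW ->]; apply: hW.
have /eqP hW_eq : (h @: W == W)%VS by rewrite eqEdim hWW (limg_dim_eq W_ker) leqnn.
move=> y; rewrite inE => yW.
have /memv_imgP [x xW ->] : y \in (h @: W)%VS by rewrite hW_eq.
by exists x.
Qed.

Section Projection.
Variables (K : fieldType) (V : vectType K) (W U : {vspace V}).
Hypotheses (capWU : (W :&: U = 0)%VS) (sumWU : (W + U = fullv)%VS).

Let capUW : (U :&: W = 0)%VS. Proof. by rewrite capvC. Qed.

Let memUW x : x \in (U + W)%VS. Proof. by rewrite addvC sumWU memvf. Qed.

Lemma ucomp_mem x : ucomp W U x \in U.
Proof. exact: memv_pi. Qed.

Lemma ucomp_id u : u \in U -> ucomp W U u = u.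
Proof. exact: daddv_pi_id. Qed.

Lemma ucompD x y : ucomp W U (x + y) = ucomp W U x + ucomp W U y.
Proof. exact: linearD. Qed.

Lemma ucompB x y : ucomp W U (x - y) = ucomp W U x - ucomp W U y.
Proof. exact: linearB. Qed.

Lemma subr_ucomp_mem x : x - ucomp W U x \in W.
Proof.
rewrite -[x in x - _](daddv_pi_add capUW (memUW x)).
by rewrite /ucomp addrAC subrr add0r memv_pi.
Qed.

Lemma ucomp_eq0 x : (ucomp W U x == 0) = (x \in W).
Proof.
apply/eqP/idP=> [ux0 | xW]; first by rewrite -[x]subr0 -ux0 subr_ucomp_mem.
apply: (@addIr _ (daddv_pi W U x)).
by rewrite add0r (daddv_pi_add capUW (memUW x)) daddv_pi_id.
Qed.

Lemma ucomp_eq x y : (ucomp W U x == ucomp W U y) = (x - y \in W).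
Proof. by rewrite -subr_eq0 -ucompB ucomp_eq0. Qed.

Lemma ucomp_addWU w u : w \in W -> u \in U -> ucomp W U (w + u) = u.
Proof.
by move=> wW uU; rewrite -{2}(ucomp_id uU); apply/eqP; rewrite ucomp_eq addrK.
Qed.

Lemma ucomp_decomp x : exists2 w, w \in W & x = w + ucomp W U x.
Proof. by exists (x - ucomp W U x); rewrite ?subr_ucomp_mem ?subrK. Qed.

Section Family.
Variables (phi : V -> 'End(V)) (v : V -> V).
Hypothesis phiW : forall u, u \in U -> forall w, w \in W -> phi u w \in W.

Local Notation f := (f_fam W U phi v).
Local Notation g := (g_fam W U phi v).

Lemma f_famE w u : w \in W -> u \in U -> f (w + u) = phi u w + f u.
Proof. by move=> wW uU; rewrite /f_fam ucomp_addWU ?ucomp_id // linearD addrA. Qed.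

Lemma ucomp_f_fam x : ucomp W U (f x) = g (ucomp W U x).
Proof.
have [w wW {1}->] := ucomp_decomp x; have uU := ucomp_mem x.
by apply/eqP; rewrite ucomp_eq f_famE // addrK phiW.
Qed.

Lemma g_fam_eq u1 u2 : (g u1 == g u2) = (f u1 - f u2 \in W).
Proof. exact: ucomp_eq. Qed.

Lemma phi_inj_f_fam u :
  u \in U -> {in predT &, injective f} -> {in W &, injective (phi u)}.
Proof. by move=> uU f_inj w1 w2 w1W w2W E; apply/(addIr u)/f_inj; rewrite ?f_famE ?E. Qed.

Lemma g_inj_f_fam :
  (forall u, u \in U -> bij_on [pred x | x \in W] (phi u)) ->
  {in predT &, injective f} -> {in U &, injective g}.
Proof.
move=> phi_bij f_inj u1 u2 u1U u2U /esym/eqP; rewrite g_fam_eq => df.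
have [_ _ /(_ _ df) [w wW phiw]] := phi_bij u1 u1U.
have fwu : f (w + u1) = f u2 by rewrite f_famE // phiw subrK.
by rewrite -(ucomp_addWU wW u1U) (f_inj _ _ isT isT fwu) ucomp_id.
Qed.

Lemma g_surj_f_fam :
  {in predT, forall y, exists2 x, x \in predT & f x = y} ->
  {in U, forall y, exists2 x, x \in U & g x = y}.
Proof.
move=> f_surj y yU; have [x _ fx] := f_surj y isT.
by exists (ucomp W U x); rewrite ?ucomp_mem // -ucomp_f_fam fx ucomp_id.
Qed.

Lemma f_inj_fam :
  (forall u, u \in U -> {in W &, injective (phi u)}) ->
  {in U &, injective g} -> {in predT &, injective f}.
Proof.
move=> phi_inj g_inj x1 x2 _ _ E.
have Eu : ucomp W U x1 = ucomp W U x2.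
  by apply: g_inj; rewrite ?ucomp_mem // -!ucomp_f_fam E.
have [w1 w1W x1E] := ucomp_decomp x1; have [w2 w2W x2E] := ucomp_decomp x2.
move: E; rewrite x1E x2E Eu !f_famE ?ucomp_mem // => /addIr /phi_inj.
by move=> /(_ (ucomp_mem x2) w1W w2W) ->.
Qed.

Lemma f_surj_fam :
  (forall u, u \in U -> {in W, forall y, exists2 x, x \in W & phi u x = y}) ->
  {in U, forall y, exists2 x, x \in U & g x = y} ->
  {in predT, forall y, exists2 x, x \in predT & f x = y}.
Proof.
move=> phi_surj g_surj y _; have [u uU gu] := g_surj _ (ucomp_mem y).
have /(phi_surj u uU) [w wW phiw] : y - f u \in W.
  by rewrite -ucomp_eq ucomp_f_fam (ucomp_id uU) gu.
by exists (w + u); rewrite // f_famE // phiw subrK.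
Qed.

Lemma bij_on_f_fam :
  bij_on predT f <->
  (forall u, u \in U -> bij_on [pred x | x \in W] (phi u)) /\
  bij_on [pred x | x \in U] g.
Proof.
split=> [[_ f_inj f_surj] | [phi_bij [_ g_inj g_surj]]].
  have phi_bij u : u \in U -> bij_on [pred x | x \in W] (phi u).
    by move=> uU; apply: lfun_bij_on; [apply: phiW | apply: phi_inj_f_fam].
  split=> //; split; [|exact: g_inj_f_fam|exact: g_surj_f_fam].
  by move=> u _; rewrite inE /g_fam ucomp_mem.
split=> //; first by apply: f_inj_fam => // u /phi_bij [].
by apply: f_surj_fam => // u /phi_bij [].
Qed.

End Family.

Lemma f_fam_add_id (phi : V -> 'End(V)) (v : V -> V) x :
  f_fam W U (fun u => phi u + \1)%VF v x = f_fam W U phi v x + x.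
Proof. by rewrite /f_fam add_lfunE id_lfunE addrAC. Qed.

Lemma g_fam_add_id (phi : V -> 'End(V)) (v : V -> V) u : u \in U ->
  g_fam W U (fun u => phi u + \1)%VF v u = g_fam W U phi v u + u.
Proof. by move=> uU; rewrite /g_fam f_fam_add_id ucompD (ucomp_id uU). Qed.

End Projection.

Theorem proposition4p1 (K : fieldType) (V : vectType K) (W U : {vspace V})
    (phi : V -> 'End(V)) (v : V -> V) :
  (W :&: U = 0)%VS -> (W + U = fullv)%VS ->
  (forall u, u \in U -> forall w, w \in W -> phi u w \in W) ->
  (bijective (f_fam W U phi v) <->
     (forall u, u \in U -> bij_on [pred x | x \in W] (phi u)) /\
     bij_on [pred x | x \in U] (g_fam W U phi v)) /\
  (complete_on predT (f_fam W U phi v) <->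
     (forall u, u \in U -> complete_on [pred x | x \in W] (phi u)) /\
     complete_on [pred x | x \in U] (g_fam W U phi v)).
Proof.
move=> capWU sumWU phiW.
pose phi1 u := (phi u + \1)%VF.
have phi1W u : u \in U -> forall w, w \in W -> phi1 u w \in W.
  by move=> uU w wW; rewrite add_lfunE id_lfunE rpredD ?phiW.
have bij_f := bij_on_f_fam capWU sumWU v phiW.
have bij_f1 := bij_on_f_fam capWU sumWU v phi1W.
have f1E : bij_on predT (fun x => f_fam W U phi v x + x) <->
           bij_on predT (f_fam W U phi1 v).
  by apply: eq_bij_on => x _; rewrite f_fam_add_id.
have phi1E u : bij_on [pred x | x \in W] (fun x => phi u x + x) <->
               bij_on [pred x | x \in W] (phi1 u).
  by apply: eq_bij_on => x _; rewrite add_lfunE id_lfunE.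
have g1E : bij_on [pred x | x \in U] (fun x => g_fam W U phi v x + x) <->
           bij_on [pred x | x \in U] (g_fam W U phi1 v).
  by apply: eq_bij_on => x xU; rewrite g_fam_add_id.
split; first by split=> [/bijective_bij_on/bij_f | /bij_f/bijective_bij_on].
split=> [[/bij_f [phi_bij g_bij] /f1E /bij_f1 [phi1_bij g1_bij]] | [phi_c [g_bij g1_bij]]].
  split=> [u uU|]; first by split; [apply: phi_bij | apply/phi1E/phi1_bij].
  by split=> //; apply/g1E.
split; first by apply/bij_f; split=> // u /phi_c [].
apply/f1E/bij_f1; split=> [u uU | ]; last exact/g1E.
by have [_ /phi1E] := phi_c u uU.
Qed.
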